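(* Let $\Omega \subset \mathbb{R}^2$ be open, bounded with $|\Omega| = 1$, and let $\Omega = \bigcup_{i=1}^N \Omega_i$ be a partition into pairwise disjoint measurable sets of positive measure. Define $\eta_0 > 0$ by $\pi\eta_0^2 = \min_{1 \le i \le N}|\Omega_i|$. For each $i$ let $B_i$ be a disk with $|B_i| = |\Omega_i|$ and $|\Omega_i \triangle B_i| = |\Omega_i|\mathcal{A}(\Omega_i)$. Let $c_1 > 0$, $d_2 \ge 0$ and assume $\sum_{i=1}^N \frac{|\Omega_i|}{|\Omega|} D(\Omega_i) \le d_2$. Let $I = \{ i \in \{1,\dots,N\} : |\Omega_i| \ge (1+c_1)\pi\eta_0^2\}$. Then $$\left|\left\{x \in \Omega : \Big\| x - \bigcup_{i \in I} B_i\Big\| \le 2\eta_0\right\}\right| \le \frac{9d_2}{c_1} + 9d_2.$$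
   Context: $|\cdot|$ is Lebesgue measure and $\triangle$ is symmetric difference. For $x \in \mathbb{R}^2$ and $A \subset \mathbb{R}^2$, $\|x - A\| := \inf_{y\in A}\|x-y\|$. Fraenkel asymmetry: $\mathcal{A}(E) := \inf_B \frac{|E\triangle B|}{|E|}$ over disks $B$ with $|B| = |E|$ (the infimum is attained). $D(\Omega_i) := \frac{|\Omega_i| - \min_{1\le j\le N}|\Omega_j|}{|\Omega_i|}$. *)

From Stdlib Require Import Reals Lra.
Open Scope R_scope.

Definition pt := (R * R)%type.
Definition pset := pt -> Prop.

Definition dist (p q : pt) : R :=
  sqrt ((fst p - fst q) ^ 2 + (snd p - snd q) ^ 2).

Record rect := Rect { rx1 : R; rx2 : R; ry1 : R; ry2 : R }.
Definition in_rect (p : pt) (r : rect) : Prop :=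
  rx1 r <= fst p <= rx2 r /\ ry1 r <= snd p <= ry2 r.
Definition area (r : rect) : R :=
  Rmax 0 (rx2 r - rx1 r) * Rmax 0 (ry2 r - ry1 r).

Definition covers (A : pset) (f : nat -> rect) : Prop :=
  forall p, A p -> exists n, in_rect p (f n).

Definition cover_value (A : pset) (s : R) : Prop :=
  exists f : nat -> rect, covers A f /\ infinite_sum (fun n => area (f n)) s.

Definition outer_measure (A : pset) (m : R) : Prop :=
  (forall s, cover_value A s -> m <= s) /\
  (forall eps, eps > 0 -> exists s, cover_value A s /\ s < m + eps).

(* Caratheodory measurability (tested on sets of finite outer measure,
   which is equivalent since sets of infinite outer measure satisfy the
   criterion trivially). *)
Definition measurable (E : pset) : Prop :=
  forall (T : pset) (m : R), outer_measure T m ->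
    exists a b, outer_measure (fun p => T p /\ E p) a /\
                outer_measure (fun p => T p /\ ~ E p) b /\ a + b = m.

Definition symdiff (A B : pset) : pset :=
  fun p => (A p /\ ~ B p) \/ (B p /\ ~ A p).

Definition disk (c : pt) (r : R) : pset := fun p => dist p c < r.
Definition is_disk (B : pset) : Prop :=
  exists c r, r > 0 /\ forall p, B p <-> disk c r p.

Definition fraenkel_asymmetry (E : pset) (a : R) : Prop :=
  exists mE, outer_measure E mE /\
  (forall B mB mD, is_disk B -> outer_measure B mB -> mB = mE ->
      outer_measure (symdiff E B) mD -> a <= mD / mE) /\
  (forall eps, eps > 0 -> exists B mD, is_disk B /\ outer_measure B mE /\
      outer_measure (symdiff E B) mD /\ mD / mE < a + eps).

Definition is_open (O : pset) : Prop :=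
  forall p, O p -> exists r, r > 0 /\ forall q, dist q p < r -> O q.

Definition is_bounded (O : pset) : Prop :=
  exists M, forall p, O p -> dist p (0, 0) <= M.

(* ||x - U|| <= r, i.e. inf_{y in U} |x - y| <= r (false if U is empty) *)
Definition dist_set_le (x : pt) (U : pset) (r : R) : Prop :=
  forall eps, eps > 0 -> exists y, U y /\ dist x y < r + eps.

Fixpoint rsum (n : nat) (f : nat -> R) : R :=
  match n with
  | O => 0
  | S k => rsum k f + f k
  end.

(* Write a := PI * eta0^2 and I for the indices of the pieces of measure at
   least (1 + c1) a.  The proof has three ingredients.
   1. A disk of radius r has outer measure at most PI r^2: cover it by 2n
      vertical strips bounded by the abscissae r sin(k PI / 2n); their total
      area is at most PI r^2 (1 + 1/n), using sum_k cos^2(k PI / 2n) = (n+1)/2.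
      Hence every disk B_i, i in I, has radius at least eta0.
   2. If all selected disks have radius at least delta, the
      (lam * delta)-neighbourhood of their union lies in the union of the same
      disks dilated by 1 + lam + u (any u > 0).  Dilating a rectangle cover
      multiplies its area by the square of the factor, so this neighbourhood
      has measure at most (1 + lam)^2 times the total measure of the disks.
   3. For i in I, |Omega_i| <= (1 + c1)/c1 * (|Omega_i| - a), so the total
      measure of the large pieces is at most (1 + c1)/c1 * d2.
   With lam = 2 the bound is 9 (1 + c1)/c1 * d2 = 9 d2/c1 + 9 d2. *)

From Pilot Require Import Defs.
From Stdlib Require Import Reals Lra Lia Classical FunctionalExtensionality.
Open Scope R_scope.

Lemma dist_triangle p q r : Defs.dist p r <= Defs.dist p q + Defs.dist q r.
Proof.
  unfold Defs.dist. destruct p as [p1 p2], q as [q1 q2], r as [r1 r2]; cbn [fst snd].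
  set (a := p1 - q1). set (b := p2 - q2). set (c := q1 - r1). set (d := q2 - r2).
  replace (p1 - r1) with (a + c) by (unfold a, c; ring).
  replace (p2 - r2) with (b + d) by (unfold b, d; ring).
  pose proof (sqrt_cauchy a b c d) as Hcs. unfold Rsqr in Hcs.
  replace (a * a + b * b) with (a ^ 2 + b ^ 2) in Hcs by ring.
  replace (c * c + d * d) with (c ^ 2 + d ^ 2) in Hcs by ring.
  assert (Hab : 0 <= a ^ 2 + b ^ 2) by nra.
  assert (Hcd : 0 <= c ^ 2 + d ^ 2) by nra.
  pose proof (pow2_sqrt _ Hab). pose proof (pow2_sqrt _ Hcd).
  pose proof (sqrt_pos (a ^ 2 + b ^ 2)). pose proof (sqrt_pos (c ^ 2 + d ^ 2)).
  rewrite <- (sqrt_pow2 (sqrt (a ^ 2 + b ^ 2) + sqrt (c ^ 2 + d ^ 2))) by lra.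
  apply sqrt_le_1_alt. nra.
Qed.

Lemma sqrt_sum_squares_scale k a b :
  0 < k -> sqrt ((k * a) ^ 2 + (k * b) ^ 2) = k * sqrt (a ^ 2 + b ^ 2).
Proof.
  intros Hk. replace ((k * a) ^ 2 + (k * b) ^ 2) with (k ^ 2 * (a ^ 2 + b ^ 2)) by ring.
  rewrite sqrt_mult_alt by nra. rewrite sqrt_pow2 by lra. reflexivity.
Qed.

Lemma rsum_ext n f g : (forall k, (k < n)%nat -> f k = g k) -> rsum n f = rsum n g.
Proof.
  induction n as [|n IH]; simpl; intros H; [reflexivity|].
  rewrite IH by (intros; apply H; lia). rewrite H by lia. reflexivity.
Qed.

Lemma rsum_le n f g : (forall k, (k < n)%nat -> f k <= g k) -> rsum n f <= rsum n g.
Proof.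
  induction n as [|n IH]; simpl; intros H; [lra|].
  pose proof (IH ltac:(intros; apply H; lia)). pose proof (H n ltac:(lia)). lra.
Qed.

Lemma rsum_plus n f g : rsum n (fun k => f k + g k) = rsum n f + rsum n g.
Proof. induction n as [|n IH]; simpl; [lra|]. rewrite IH. ring. Qed.

Lemma rsum_scal n a f : rsum n (fun k => a * f k) = a * rsum n f.
Proof. induction n as [|n IH]; simpl; [lra|]. rewrite IH. ring. Qed.

Lemma rsum_const n a : rsum n (fun _ => a) = INR n * a.
Proof. induction n as [|n IH]; simpl rsum; [simpl; lra|]. rewrite IH, S_INR. ring. Qed.

Lemma rsum_nonneg n f : (forall k, (k < n)%nat -> 0 <= f k) -> 0 <= rsum n f.
Proof.
  intros H. pose proof (rsum_le n (fun _ => 0) f H) as Hle.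
  rewrite rsum_const in Hle. lra.
Qed.

Lemma rsum_shift n f : rsum (S n) f = f 0%nat + rsum n (fun k => f (S k)).
Proof.
  induction n as [|n IH]; [simpl; lra|].
  change (rsum (S (S n)) f) with (rsum (S n) f + f (S n)). rewrite IH. simpl. ring.
Qed.

Lemma rsum_rev n f : rsum n f = rsum n (fun k => f (n - 1 - k)%nat).
Proof.
  induction n as [|n IH]; [reflexivity|].
  change (rsum (S n) f) with (rsum n f + f n). rewrite rsum_shift, IH.
  replace (S n - 1 - 0)%nat with n by lia.
  rewrite (rsum_ext n (fun k => f (S n - 1 - S k)%nat) (fun k => f (n - 1 - k)%nat))
    by (intros; f_equal; lia).
  ring.
Qed.

Lemma area_nonneg r : 0 <= area r.
Proof.
  unfold area. pose proof (Rmax_l 0 (rx2 r - rx1 r)). pose proof (Rmax_l 0 (ry2 r - ry1 r)). nra.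
Qed.

Lemma cover_value_mono A B s : (forall p, A p -> B p) -> cover_value B s -> cover_value A s.
Proof. intros H [f [Hc Hs]]. exists f. split; auto. intros p Hp. apply Hc, H, Hp. Qed.

Lemma cover_value_nonneg A s : cover_value A s -> 0 <= s.
Proof.
  intros [f [_ Hs]].
  apply Rle_cv_lim with (fun _ => 0) (sum_f_R0 (fun n => area (f n))); [| |exact Hs].
  - intros n. apply cond_pos_sum. intros; apply area_nonneg.
  - intros eps He. exists 0%nat. intros. rewrite Rdist_eq. lra.
Qed.

Lemma cover_value_rect r : cover_value (fun p => in_rect p r) (area r).
Proof.
  set (z := Rect 0 0 0 0).
  assert (Hz : area z = 0) by (unfold area, z, Rmax; simpl; destruct (Rle_dec 0 (0 - 0)); lra).
  exists (fun n => match n with O => r | S _ => z end). split.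
  - intros p Hp. exists 0%nat. exact Hp.
  - assert (Hsum : forall n,
        sum_f_R0 (fun n => area (match n with O => r | S _ => z end)) n = area r).
    { induction n as [|n IH]; [reflexivity|]. rewrite tech5, IH, Hz. ring. }
    intros eps He. exists 0%nat. intros n _. rewrite Hsum, Rdist_eq. lra.
Qed.

Lemma cover_value_empty : cover_value (fun _ => False) 0.
Proof.
  pose proof (cover_value_rect (Rect 0 0 0 0)) as H.
  replace (area (Rect 0 0 0 0)) with 0 in H
    by (unfold area, Rmax; simpl; destruct (Rle_dec 0 (0 - 0)); lra).
  eapply cover_value_mono; [|exact H]. intros p [].
Qed.

Definition interleave {X : Type} (f g : nat -> X) (n : nat) : X :=
  if Nat.even n then f (Nat.div2 n) else g (Nat.div2 n).

Lemma interleave_even {X} (f g : nat -> X) n : interleave f g (2 * n) = f n.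
Proof. unfold interleave. rewrite Nat.even_mul, Nat.div2_double. reflexivity. Qed.

Lemma interleave_odd {X} (f g : nat -> X) n : interleave f g (S (2 * n)) = g n.
Proof.
  unfold interleave. rewrite Nat.even_succ, Nat.odd_mul, Nat.div2_succ_double. reflexivity.
Qed.

Lemma interleave_sum_odd f g n :
  sum_f_R0 (interleave f g) (S (2 * n)) = sum_f_R0 f n + sum_f_R0 g n.
Proof.
  induction n as [|n IH]; [reflexivity|].
  replace (S (2 * S n)) with (S (S (S (2 * n)))) by lia.
  rewrite tech5, tech5, IH, (tech5 f), (tech5 g).
  replace (S (S (2 * n))) with (2 * S n)%nat by lia.
  rewrite interleave_even, interleave_odd. ring.
Qed.

Lemma interleave_sum_even f g n :
  sum_f_R0 (interleave f g) (2 * S n) = sum_f_R0 f (S n) + sum_f_R0 g n.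
Proof.
  replace (2 * S n)%nat with (S (S (2 * n))) by lia.
  rewrite tech5, interleave_sum_odd.
  replace (S (S (2 * n))) with (2 * S n)%nat by lia.
  rewrite interleave_even, (tech5 f). ring.
Qed.

Lemma interleave_infinite_sum f g s t :
  infinite_sum f s -> infinite_sum g t -> infinite_sum (interleave f g) (s + t).
Proof.
  intros Hf Hg eps He.
  destruct (Hf (eps / 2) ltac:(lra)) as [N1 H1].
  destruct (Hg (eps / 2) ltac:(lra)) as [N2 H2].
  assert (Hsplit : forall n1 n2, (n1 >= N1)%nat -> (n2 >= N2)%nat ->
            Rdist (sum_f_R0 f n1 + sum_f_R0 g n2) (s + t) < eps).
  { intros n1 n2 Hn1 Hn2. pose proof (H1 n1 Hn1). pose proof (H2 n2 Hn2).
    unfold Rdist in *.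
    replace (sum_f_R0 f n1 + sum_f_R0 g n2 - (s + t))
      with ((sum_f_R0 f n1 - s) + (sum_f_R0 g n2 - t)) by ring.
    pose proof (Rabs_triang (sum_f_R0 f n1 - s) (sum_f_R0 g n2 - t)). lra. }
  exists (2 * (N1 + N2) + 2)%nat. intros k Hk.
  destruct (Nat.Even_or_Odd k) as [[n ->]|[n ->]].
  - destruct n as [|n]; [lia|]. rewrite interleave_sum_even. apply Hsplit; lia.
  - replace (2 * n + 1)%nat with (S (2 * n)) by lia.
    rewrite interleave_sum_odd. apply Hsplit; lia.
Qed.

Lemma cover_value_union A B s t : cover_value A s -> cover_value B t ->
  cover_value (fun p => A p \/ B p) (s + t).
Proof.
  intros [f [Hf Hfs]] [g [Hg Hgs]].
  exists (interleave f g). split.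
  - intros p [Hp|Hp].
    + destruct (Hf p Hp) as [n Hn]. exists (2 * n)%nat. rewrite interleave_even. exact Hn.
    + destruct (Hg p Hp) as [n Hn]. exists (S (2 * n)). rewrite interleave_odd. exact Hn.
  - assert (Harea : (fun n => area (interleave f g n))
                    = interleave (fun n => area (f n)) (fun n => area (g n))).
    { apply functional_extensionality_dep. intros n. unfold interleave.
      destruct (Nat.even n); reflexivity. }
    rewrite Harea. apply interleave_infinite_sum; assumption.
Qed.

Lemma cover_value_finite_union (A : nat -> pset) (b : nat -> R) n :
  (forall k, (k < n)%nat -> exists t, cover_value (A k) t /\ t <= b k) ->
  exists t, cover_value (fun p => exists k, (k < n)%nat /\ A k p) t /\ t <= rsum n b.
Proof.
  induction n as [|n IH]; intros Hpieces.
  - exists 0. split; [|simpl; lra].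
    eapply cover_value_mono; [|apply cover_value_empty]. intros p [k [Hk _]]. lia.
  - destruct (IH ltac:(intros; apply Hpieces; lia)) as [t [Ht Htb]].
    destruct (Hpieces n ltac:(lia)) as [t' [Ht' Ht'b]].
    exists (t + t'). split; [|simpl; lra].
    eapply cover_value_mono; [|exact (cover_value_union _ _ _ _ Ht Ht')].
    intros p [k [Hk Hp]]. destruct (Nat.eq_dec k n) as [->|Hne]; [now right|].
    left. exists k. split; [lia|exact Hp].
Qed.

Lemma outer_measure_exists A s0 : cover_value A s0 -> exists m, outer_measure A m.
Proof.
  intros H0.
  destruct (completeness (fun x => cover_value A (- x))) as [l [Hub Hlub]].
  - exists 0. intros x Hx. apply cover_value_nonneg in Hx. lra.
  - exists (- s0). rewrite Ropp_involutive. exact H0.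
  - exists (- l). split.
    + intros s Hs. assert (- s <= l) by (apply Hub; rewrite Ropp_involutive; exact Hs). lra.
    + intros eps He. apply NNPP. intros Hnone.
      assert (l <= l - eps); [|lra].
      apply Hlub. intros x Hx. apply Rnot_lt_le. intros Hlt.
      apply Hnone. exists (- x). split; [exact Hx|lra].
Qed.

Lemma outer_measure_le_cover A m s : outer_measure A m -> cover_value A s -> m <= s.
Proof. intros [H _] Hs. apply H, Hs. Qed.

Definition dilate_rect (c : pt) (k : R) (r : rect) : rect :=
  Rect (fst c + k * (rx1 r - fst c)) (fst c + k * (rx2 r - fst c))
       (snd c + k * (ry1 r - snd c)) (snd c + k * (ry2 r - snd c)).

Lemma area_dilate_rect c k r : 0 < k -> area (dilate_rect c k r) = k ^ 2 * area r.
Proof.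
  intros Hk.
  assert (Hmax : forall w, Rmax 0 (k * w) = k * Rmax 0 w).
  { intros w. unfold Rmax. destruct (Rle_dec 0 (k * w)), (Rle_dec 0 w); nra. }
  unfold area, dilate_rect; simpl.
  replace (fst c + k * (rx2 r - fst c) - (fst c + k * (rx1 r - fst c)))
    with (k * (rx2 r - rx1 r)) by ring.
  replace (snd c + k * (ry2 r - snd c) - (snd c + k * (ry1 r - snd c)))
    with (k * (ry2 r - ry1 r)) by ring.
  rewrite !Hmax. ring.
Qed.

Lemma cover_value_dilate_disk c rho k v : 0 < k -> cover_value (disk c rho) v ->
  cover_value (disk c (k * rho)) (k ^ 2 * v).
Proof.
  intros Hk [f [Hcov Hsum]]. exists (fun n => dilate_rect c k (f n)). split.
  - intros p Hp. unfold disk in Hp.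
    set (a := (fst p - fst c) / k). set (b := (snd p - snd c) / k).
    set (q := (fst c + a, snd c + b)).
    assert (Hpq : Defs.dist p c = k * Defs.dist q c).
    { unfold Defs.dist, q; cbn [fst snd].
      rewrite <- sqrt_sum_squares_scale by exact Hk. f_equal. unfold a, b. field. lra. }
    assert (Hq : disk c rho q) by (unfold disk; nra).
    destruct (Hcov q Hq) as [n Hn]. exists n.
    assert (E1 : fst p = fst c + k * a) by (unfold a; field; lra).
    assert (E2 : snd p = snd c + k * b) by (unfold b; field; lra).
    unfold in_rect, dilate_rect, q in *; cbn [fst snd rx1 rx2 ry1 ry2] in *.
    rewrite E1, E2. destruct Hn as [[A1 A2] [A3 A4]]. repeat split; nra.
  - assert (Hscaled : forall n, sum_f_R0 (fun i => area (dilate_rect c k (f i))) n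
                                = k ^ 2 * sum_f_R0 (fun i => area (f i)) n).
    { intros n. rewrite scal_sum. apply sum_eq. intros i _.
      rewrite area_dilate_rect by exact Hk. ring. }
    intros eps He.
    assert (Hk2 : 0 < k ^ 2) by nra.
    destruct (Hsum (eps / k ^ 2) ltac:(apply Rdiv_lt_0_compat; lra)) as [N HN].
    exists N. intros n Hn. rewrite Hscaled. unfold Rdist in *.
    rewrite <- Rmult_minus_distr_l, Rabs_mult, (Rabs_right (k ^ 2)) by lra.
    specialize (HN n Hn).
    apply Rmult_lt_compat_l with (r := k ^ 2) in HN; [|lra].
    replace (k ^ 2 * (eps / k ^ 2)) with eps in HN by (field; lra). exact HN.
Qed.

(* If sin a, cos a >= 0, the increment of sin over [a, a + h] is at most
   sin h * cos a: this bounds the width of a strip by its angular step. *)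
Lemma sin_increment_bound a h : 0 <= a <= PI / 2 -> 0 <= h ->
  cos a * (sin (a + h) - sin a) <= sin h * cos a ^ 2.
Proof.
  intros Ha Hh. rewrite sin_plus.
  assert (0 <= sin a) by (apply sin_ge_0; lra).
  assert (0 <= cos a) by (apply cos_ge_0; lra).
  pose proof (COS_bound h).
  assert (cos a * sin a * (cos h - 1) <= 0) by (assert (0 <= cos a * sin a) by nra; nra).
  nra.
Qed.

Lemma step_containing (s : nat -> R) x n : s 0%nat <= x -> x < s n ->
  exists k, (k < n)%nat /\ s k <= x <= s (S k).
Proof.
  intros H0. induction n as [|n IH]; intros Hn; [lra|].
  destruct (Rlt_dec x (s n)) as [Hl|Hl].
  - destruct (IH Hl) as [k [Hk Hs]]. exists k. split; [lia|exact Hs].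
  - exists n. split; [lia|lra].
Qed.

Section DiskStrips.

Variable n : nat.
Hypothesis Hn : (1 <= n)%nat.

Definition angle_step : R := PI / (2 * INR n).
Definition angle (k : nat) : R := INR k * angle_step.

Lemma INR_n_pos : 0 < INR n.
Proof. apply lt_0_INR. lia. Qed.

Lemma angle_step_pos : 0 < angle_step.
Proof. unfold angle_step. pose proof INR_n_pos. pose proof PI_RGT_0. apply Rdiv_lt_0_compat; lra. Qed.

Lemma angle_step_le : angle_step <= PI / 2.
Proof.
  assert (E : angle_step * (2 * INR n) = PI)
    by (unfold angle_step; pose proof INR_n_pos; field; lra).
  assert (1 <= INR n) by (apply (le_INR 1); lia). pose proof angle_step_pos. nra.
Qed.

Lemma angle_last : angle n = PI / 2.
Proof. unfold angle, angle_step. pose proof INR_n_pos. field. lra. Qed.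

Lemma angle_range k : (k <= n)%nat -> 0 <= angle k <= PI / 2.
Proof.
  intros Hk. pose proof angle_step_pos. pose proof (pos_INR k).
  split; [unfold angle; nra|].
  rewrite <- angle_last. unfold angle. apply Rmult_le_compat_r; [lra|]. apply le_INR, Hk.
Qed.

Lemma angle_S k : angle (S k) = angle k + angle_step.
Proof. unfold angle. rewrite S_INR. ring. Qed.

(* The angles are symmetric about PI / 4, so the sums of cos^2 and of sin^2
   coincide and each equals half the number of terms. *)
Lemma sum_cos2_angles : rsum (S n) (fun k => cos (angle k) ^ 2) = (INR n + 1) / 2.
Proof.
  set (S0 := rsum (S n) (fun k => cos (angle k) ^ 2)).
  assert (Hsym : S0 = rsum (S n) (fun k => sin (angle k) ^ 2)).
  { unfold S0. rewrite rsum_rev. apply rsum_ext. intros k Hk.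
    replace (S n - 1 - k)%nat with (n - k)%nat by lia.
    replace (angle (n - k)) with (PI / 2 - angle k).
    - rewrite cos_shift. reflexivity.
    - rewrite <- angle_last. unfold angle. rewrite minus_INR by lia. ring. }
  assert (Htotal : S0 + S0 = INR (S n)).
  { rewrite Hsym at 2. unfold S0. rewrite <- rsum_plus.
    rewrite (rsum_ext _ _ (fun _ => 1)).
    - rewrite rsum_const. ring.
    - intros k _. pose proof (sin2_cos2 (angle k)) as H. unfold Rsqr in H. lra. }
  rewrite S_INR in Htotal. lra.
Qed.

Variables (c : pt) (r : R).
Hypothesis Hr : 0 < r.

(* the k-th strip to the right of the centre and its mirror image: the
   abscissae lie between r sin (angle k) and r sin (angle (S k)) and the height
   is that of the disk at the inner abscissa *)
Definition right_strip (k : nat) : rect :=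
  Rect (fst c + r * sin (angle k)) (fst c + r * sin (angle (S k)))
       (snd c - r * cos (angle k)) (snd c + r * cos (angle k)).
Definition left_strip (k : nat) : rect :=
  Rect (fst c - r * sin (angle (S k))) (fst c - r * sin (angle k))
       (snd c - r * cos (angle k)) (snd c + r * cos (angle k)).

Lemma strip_area_le x1 x2 k : (k < n)%nat ->
  x2 - x1 = r * (sin (angle (S k)) - sin (angle k)) ->
  area (Rect x1 x2 (snd c - r * cos (angle k)) (snd c + r * cos (angle k)))
  <= 2 * r ^ 2 * sin angle_step * cos (angle k) ^ 2.
Proof.
  intros Hk Hx. unfold area; cbn [rx1 rx2 ry1 ry2]. rewrite Hx.
  pose proof (angle_range k ltac:(lia)). pose proof angle_step_pos.
  assert (0 <= cos (angle k)) by (apply cos_ge_0; lra).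
  assert (0 <= sin angle_step)
    by (apply sin_ge_0; pose proof angle_step_le; pose proof PI_RGT_0; lra).
  pose proof (sin_increment_bound (angle k) angle_step ltac:(lra) ltac:(lra)) as Hinc.
  rewrite <- angle_S in Hinc.
  replace (snd c + r * cos (angle k) - (snd c - r * cos (angle k)))
    with (2 * r * cos (angle k)) by ring.
  rewrite (Rmax_right 0 (2 * r * cos (angle k))) by nra.
  assert (r ^ 2 * (cos (angle k) * (sin (angle (S k)) - sin (angle k)))
          <= r ^ 2 * (sin angle_step * cos (angle k) ^ 2))
    by (apply Rmult_le_compat_l; [nra|exact Hinc]).
  assert (0 <= r ^ 2 * (sin angle_step * cos (angle k) ^ 2)) by
    (apply Rmult_le_pos; [nra|apply Rmult_le_pos; [lra|apply pow2_ge_0]]).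
  unfold Rmax. destruct (Rle_dec 0 (r * (sin (angle (S k)) - sin (angle k)))); nra.
Qed.

Lemma disk_in_strips p : disk c r p ->
  exists k, (k < n)%nat /\ (in_rect p (right_strip k) \/ in_rect p (left_strip k)).
Proof.
  intros Hp. unfold disk, Defs.dist in Hp.
  set (a := fst p - fst c) in *. set (b := snd p - snd c) in *.
  assert (Hab : a ^ 2 + b ^ 2 < r ^ 2).
  { rewrite <- (pow2_sqrt (a ^ 2 + b ^ 2)) by nra. pose proof (sqrt_pos (a ^ 2 + b ^ 2)). nra. }
  assert (Hstrip : forall x, 0 <= x -> x ^ 2 + b ^ 2 < r ^ 2 -> exists k, (k < n)%nat /\
      r * sin (angle k) <= x <= r * sin (angle (S k)) /\
      - (r * cos (angle k)) <= b <= r * cos (angle k)).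
  { intros x Hx Hxb.
    destruct (step_containing (fun k => r * sin (angle k)) x n) as [k [Hk Hs]].
    - unfold angle. simpl. rewrite Rmult_0_l, sin_0. lra.
    - rewrite angle_last, sin_PI2. nra.
    - exists k. split; [exact Hk|]. split; [exact Hs|].
      pose proof (angle_range k ltac:(lia)).
      assert (0 <= sin (angle k)) by (apply sin_ge_0; lra).
      assert (0 <= cos (angle k)) by (apply cos_ge_0; lra).
      pose proof (sin2_cos2 (angle k)) as Hsc. unfold Rsqr in Hsc.
      assert (0 <= r * sin (angle k)) by nra.
      assert ((r * sin (angle k)) ^ 2 <= x ^ 2) by nra.
      assert (Hcos : (r * cos (angle k)) ^ 2 = r ^ 2 - (r * sin (angle k)) ^ 2).
      { replace (r ^ 2) with (r ^ 2 * (sin (angle k) * sin (angle k) + cos (angle k) * cos (angle k)))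
          at 1 by (rewrite Hsc; ring).
        ring. }
      assert (b ^ 2 <= (r * cos (angle k)) ^ 2) by lra.
      assert (0 <= r * cos (angle k)) by nra.
      split; nra. }
  destruct (Rle_dec 0 a) as [Ha|Ha].
  - destruct (Hstrip a Ha Hab) as [k [Hk [H1 H2]]]. exists k. split; [exact Hk|]. left.
    unfold in_rect, right_strip; cbn [rx1 rx2 ry1 ry2]. unfold a, b in *. lra.
  - destruct (Hstrip (- a) ltac:(lra) ltac:(nra)) as [k [Hk [H1 H2]]].
    exists k. split; [exact Hk|]. right.
    unfold in_rect, left_strip; cbn [rx1 rx2 ry1 ry2]. unfold a, b in *. lra.
Qed.

(* total area of the strips: 4 r^2 sin h sum cos^2 <= 4 r^2 h (n + 1)/2 *)
Lemma disk_cover_value : exists v, cover_value (disk c r) v /\ v <= PI * r ^ 2 + PI * r ^ 2 / INR n.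
Proof.
  destruct (cover_value_finite_union
              (fun k p => in_rect p (right_strip k) \/ in_rect p (left_strip k))
              (fun k => 4 * r ^ 2 * sin angle_step * cos (angle k) ^ 2) n) as [t [Ht Htb]].
  { intros k Hk. exists (area (right_strip k) + area (left_strip k)). split.
    - apply cover_value_union; apply cover_value_rect.
    - pose proof (strip_area_le (fst c + r * sin (angle k)) (fst c + r * sin (angle (S k))) k Hk
                    ltac:(ring)).
      pose proof (strip_area_le (fst c - r * sin (angle (S k))) (fst c - r * sin (angle k)) k Hk
                    ltac:(ring)).
      unfold right_strip, left_strip. lra. }
  exists t. split.
  { eapply cover_value_mono; [|exact Ht]. exact disk_in_strips. }
  rewrite rsum_scal in Htb.
  assert (Hsum : rsum n (fun k => cos (angle k) ^ 2) <= (INR n + 1) / 2).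
  { rewrite <- sum_cos2_angles.
    change (rsum (S n) (fun k => cos (angle k) ^ 2))
      with (rsum n (fun k => cos (angle k) ^ 2) + cos (angle n) ^ 2).
    pose proof (pow2_ge_0 (cos (angle n))). lra. }
  pose proof angle_step_pos. pose proof (sin_lt_x angle_step angle_step_pos).
  assert (0 <= sin angle_step)
    by (apply sin_ge_0; pose proof angle_step_le; pose proof PI_RGT_0; lra).
  assert (0 <= rsum n (fun k => cos (angle k) ^ 2))
    by (apply rsum_nonneg; intros; apply pow2_ge_0).
  assert (Hr2 : 0 < r ^ 2) by nra.
  assert (4 * r ^ 2 * sin angle_step * rsum n (fun k => cos (angle k) ^ 2)
          <= 4 * r ^ 2 * angle_step * ((INR n + 1) / 2)).
  { apply Rmult_le_compat; [nra|lra| |exact Hsum]. nra. }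
  replace (PI * r ^ 2 + PI * r ^ 2 / INR n) with (4 * r ^ 2 * angle_step * ((INR n + 1) / 2))
    by (unfold angle_step; pose proof INR_n_pos; field; lra).
  lra.
Qed.

End DiskStrips.

Lemma disk_outer_measure_le c r m : 0 < r -> outer_measure (disk c r) m -> m <= PI * r ^ 2.
Proof.
  intros Hr Hm. apply le_epsilon. intros eps He.
  pose proof PI_RGT_0.
  assert (HA : 0 < PI * r ^ 2) by (apply Rmult_lt_0_compat; [lra|nra]).
  destruct (archimed_cor1 (eps / (PI * r ^ 2))) as [n [Hn Hn0]];
    [apply Rdiv_lt_0_compat; lra|].
  destruct (disk_cover_value n ltac:(lia) c r Hr) as [v [Hv Hvb]].
  pose proof (outer_measure_le_cover _ _ _ Hm Hv).
  assert (PI * r ^ 2 / INR n <= eps); [|lra].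
  apply Rmult_lt_compat_l with (r := PI * r ^ 2) in Hn; [|lra].
  replace (PI * r ^ 2 * (eps / (PI * r ^ 2))) with eps in Hn by (field; split; lra).
  unfold Rdiv. lra.
Qed.

Lemma disk_radius_lower_bound c r m delta : 0 < r -> 0 < delta ->
  outer_measure (disk c r) m -> PI * delta ^ 2 <= m -> delta <= r.
Proof.
  intros Hr Hd Hm Hle. pose proof (disk_outer_measure_le c r m Hr Hm). pose proof PI_RGT_0.
  assert (delta ^ 2 <= r ^ 2) by (apply Rmult_le_reg_l with PI; lra).
  nra.
Qed.

Lemma le_of_le_plus_small s a K :
  (forall u, 0 < u <= 1 -> s <= a + u * K) -> s <= a.
Proof.
  intros H. apply le_epsilon. intros eps He.
  pose proof (Rabs_pos K) as HK.
  set (u := Rmin 1 (eps / (Rabs K + 1))).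
  assert (Hu : 0 < u) by (apply Rmin_pos; [lra|apply Rdiv_lt_0_compat; lra]).
  assert (HuK : u * (Rabs K + 1) <= eps).
  { pose proof (Rmin_r 1 (eps / (Rabs K + 1))).
    apply Rle_trans with (eps / (Rabs K + 1) * (Rabs K + 1)).
    - apply Rmult_le_compat_r; [lra|exact H0].
    - right. field. lra. }
  pose proof (H u (conj Hu (Rmin_l _ _))). pose proof (Rle_abs K).
  assert (u * K <= u * Rabs K) by (apply Rmult_le_compat_l; lra).
  lra.
Qed.

Lemma dilation_expansion lam W Nr u : 0 <= lam -> 0 <= W -> 0 <= Nr -> 0 < u <= 1 ->
  (1 + lam + u) ^ 2 * (W + Nr * u)
  <= (1 + lam) ^ 2 * W + u * ((1 + lam) ^ 2 * Nr + (3 + 2 * lam) * (W + Nr)).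
Proof.
  intros Hl HW HN Hu.
  assert (Hsq : (1 + lam + u) ^ 2 <= (1 + lam) ^ 2 + u * (3 + 2 * lam)) by nra.
  assert (HWN : 0 <= W + Nr * u) by nra.
  apply Rle_trans with (((1 + lam) ^ 2 + u * (3 + 2 * lam)) * (W + Nr * u)).
  - apply Rmult_le_compat_r; lra.
  - assert (u * (3 + 2 * lam) * (Nr * u) <= u * (3 + 2 * lam) * Nr).
    { apply Rmult_le_compat_l; [nra|]. nra. }
    nra.
Qed.

Section DiskNeighbourhood.

Variables (N : nat) (c : nat -> pt) (rho m w : nat -> R) (P : nat -> Prop) (lam delta : R).
Hypothesis hm : forall i, (i < N)%nat -> outer_measure (disk (c i) (rho i)) (m i).
Hypothesis hdelta : 0 < delta.
Hypothesis hlam : 0 <= lam.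
Hypothesis hPrho : forall i, (i < N)%nat -> P i -> delta <= rho i.
Hypothesis hw : forall i, (i < N)%nat -> 0 <= w i.
Hypothesis hPw : forall i, (i < N)%nat -> P i -> m i <= w i.

Lemma neighbourhood_in_dilated_disks u x : 0 < u ->
  dist_set_le x (fun y => exists i, (i < N)%nat /\ P i /\ disk (c i) (rho i) y) (lam * delta) ->
  exists i, (i < N)%nat /\ P i /\ disk (c i) ((1 + lam + u) * rho i) x.
Proof.
  intros Hu Hx.
  destruct (Hx (u * delta) ltac:(nra)) as [y [[i [Hi [HP Hy]]] Hxy]].
  exists i. split; [exact Hi|]. split; [exact HP|].
  unfold disk in *. pose proof (dist_triangle x y (c i)). pose proof (hPrho i Hi HP).
  nra.
Qed.

Lemma dilated_disks_cover_value u : 0 < u ->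
  exists t, cover_value (fun x => exists i, (i < N)%nat /\ P i /\
                                            disk (c i) ((1 + lam + u) * rho i) x) t
            /\ t <= (1 + lam + u) ^ 2 * rsum N (fun i => w i + u).
Proof.
  intros Hu. rewrite <- rsum_scal.
  apply (cover_value_finite_union (fun i x => P i /\ disk (c i) ((1 + lam + u) * rho i) x)).
  intros i Hi. pose proof (hw i Hi).
  assert (Hk2 : 0 <= (1 + lam + u) ^ 2) by apply pow2_ge_0.
  destruct (classic (P i)) as [HP|HnP].
  - destruct (proj2 (hm i Hi) u Hu) as [v [Hv Hvb]].
    exists ((1 + lam + u) ^ 2 * v). split.
    + eapply cover_value_mono; [|apply cover_value_dilate_disk; [lra|exact Hv]].
      intros x [_ Hx]. exact Hx.
    + pose proof (hPw i Hi HP). apply Rmult_le_compat_l; lra.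
  - exists 0. split.
    + eapply cover_value_mono; [|exact cover_value_empty]. intros x [Hx _]. exact (HnP Hx).
    + apply Rmult_le_pos; lra.
Qed.

(* Letting the dilation slack u tend to 0 gives the bound (1 + lam)^2 sum w. *)
Theorem disk_neighbourhood_measure (A : pset) :
  (forall x, A x ->
     dist_set_le x (fun y => exists i, (i < N)%nat /\ P i /\ disk (c i) (rho i) y)
                 (lam * delta)) ->
  exists s, outer_measure A s /\ s <= (1 + lam) ^ 2 * rsum N w.
Proof.
  intros HA.
  assert (Hcover : forall u, 0 < u <= 1 ->
            exists t, cover_value A t /\ t <= (1 + lam + u) ^ 2 * (rsum N w + INR N * u)).
  { intros u Hu. destruct (dilated_disks_cover_value u ltac:(lra)) as [t [Ht Htb]].
    exists t. split.
    - eapply cover_value_mono; [|exact Ht].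
      intros x Hx. exact (neighbourhood_in_dilated_disks u x ltac:(lra) (HA x Hx)).
    - rewrite rsum_plus, rsum_const in Htb. exact Htb. }
  destruct (Hcover 1 ltac:(lra)) as [t1 [Ht1 _]].
  destruct (outer_measure_exists _ _ Ht1) as [s Hs].
  exists s. split; [exact Hs|].
  assert (HW : 0 <= rsum N w) by (apply rsum_nonneg; exact hw).
  pose proof (pos_INR N).
  apply (le_of_le_plus_small s _ ((1 + lam) ^ 2 * INR N + (3 + 2 * lam) * (rsum N w + INR N))).
  intros u Hu. destruct (Hcover u Hu) as [t [Ht Htb]].
  pose proof (outer_measure_le_cover _ _ _ Hs Ht).
  pose proof (dilation_expansion lam (rsum N w) (INR N) u hlam HW ltac:(lra) Hu).
  lra.
Qed.

End DiskNeighbourhood.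

Lemma large_pieces_mass n (m : nat -> R) a c1 th : 0 < c1 ->
  (forall i, (i < n)%nat -> a <= m i) -> (1 + c1) * a <= th ->
  rsum n (fun i => if Rge_dec (m i) th then m i else 0)
  <= (1 + c1) / c1 * rsum n (fun i => m i - a).
Proof.
  intros Hc1 Ha Hth. rewrite <- rsum_scal. apply rsum_le. intros i Hi.
  pose proof (Ha i Hi).
  assert (Hpos : 0 <= (1 + c1) / c1) by (apply Rle_mult_inv_pos; lra).
  destruct (Rge_dec (m i) th) as [Hlarge|_]; [|nra].
  apply Rmult_le_reg_l with c1; [lra|].
  replace (c1 * ((1 + c1) / c1 * (m i - a))) with ((1 + c1) * (m i - a)) by (field; lra).
  nra.
Qed.

Theorem mainTheorem4
  (Om : pset) (N : nat) (Omi : nat -> pset) (m : nat -> R)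
  (eta0 : R) (c : nat -> pt) (rho : nat -> R) (asym : nat -> R)
  (c1 d2 : R)
  (hN : (1 <= N)%nat)
  (hopen : is_open Om) (hbdd : is_bounded Om) (hOm1 : outer_measure Om 1)
  (hunion : forall p, Om p <-> exists i, (i < N)%nat /\ Omi i p)
  (hdisj : forall i j p, (i < N)%nat -> (j < N)%nat -> i <> j ->
              Omi i p -> Omi j p -> False)
  (hmeas : forall i, (i < N)%nat -> measurable (Omi i))
  (hm : forall i, (i < N)%nat -> outer_measure (Omi i) (m i))
  (hmpos : forall i, (i < N)%nat -> m i > 0)
  (heta0 : eta0 > 0)
  (heta0min : (exists j, (j < N)%nat /\ PI * eta0 ^ 2 = m j) /\
              (forall i, (i < N)%nat -> PI * eta0 ^ 2 <= m i))
  (hrho : forall i, (i < N)%nat -> rho i > 0)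
  (hBm : forall i, (i < N)%nat -> outer_measure (disk (c i) (rho i)) (m i))
  (hasym : forall i, (i < N)%nat -> fraenkel_asymmetry (Omi i) (asym i))
  (hBopt : forall i, (i < N)%nat ->
      outer_measure (symdiff (Omi i) (disk (c i) (rho i))) (m i * asym i))
  (hc1 : c1 > 0) (hd2 : d2 >= 0)
  (hsum : rsum N (fun i => (m i / 1) * ((m i - PI * eta0 ^ 2) / m i)) <= d2) :
  exists s,
    outer_measure
      (fun x => Om x /\
         dist_set_le x
           (fun y => exists i, (i < N)%nat /\ m i >= (1 + c1) * PI * eta0 ^ 2 /\
                               disk (c i) (rho i) y)
           (2 * eta0))
      s /\
    s <= 9 * d2 / c1 + 9 * d2.
Proof.
  destruct heta0min as [_ hmin].
  set (w := fun i => if Rge_dec (m i) ((1 + c1) * PI * eta0 ^ 2) then m i else 0).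
  assert (hw : forall i, (i < N)%nat -> 0 <= w i).
  { intros i Hi. pose proof (hmpos i Hi). unfold w. destruct (Rge_dec _ _); lra. }
  assert (hlarge_w : forall i, (i < N)%nat -> m i >= (1 + c1) * PI * eta0 ^ 2 -> m i <= w i).
  { intros i Hi Hlarge. unfold w. destruct (Rge_dec _ _); lra. }
  assert (hlarge_rho : forall i, (i < N)%nat -> m i >= (1 + c1) * PI * eta0 ^ 2 -> eta0 <= rho i).
  { intros i Hi _.
    exact (disk_radius_lower_bound (c i) (rho i) (m i) eta0 (hrho i Hi) heta0 (hBm i Hi) (hmin i Hi)). }
  assert (hmass : rsum N w <= (1 + c1) / c1 * d2).
  { assert (Hexcess : rsum N (fun i => (m i / 1) * ((m i - PI * eta0 ^ 2) / m i))
                      = rsum N (fun i => m i - PI * eta0 ^ 2)).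
    { apply rsum_ext. intros i Hi. pose proof (hmpos i Hi). field. lra. }
    apply Rle_trans with (1 := large_pieces_mass N m (PI * eta0 ^ 2) c1
                                 ((1 + c1) * PI * eta0 ^ 2) hc1 hmin ltac:(lra)).
    apply Rmult_le_compat_l; [apply Rle_mult_inv_pos; lra|].
    rewrite <- Hexcess. exact hsum. }
  match goal with |- exists s, outer_measure ?nbhd s /\ _ =>
    destruct (disk_neighbourhood_measure N c rho m w _ 2 eta0 hBm heta0 ltac:(lra)
                hlarge_rho hw hlarge_w nbhd (fun x Hx => proj2 Hx)) as [s [Hs Hsb]]
  end.
  exists s. split; [exact Hs|].
  replace (9 * d2 / c1 + 9 * d2) with ((1 + 2) ^ 2 * ((1 + c1) / c1 * d2)) by (field; lra).
  apply Rle_trans with (1 := Hsb). apply Rmult_le_compat_l; [lra|exact hmass].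
Qed.
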